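(* Let $k\ge 2$ be a fixed integer. For $n\ge 1$, let $Y_n$ be the random variable counting the indices $i$ with $1\le i\le n-k+1$ such that $p_i<p_{i+1}<\cdots<p_{i+k-1}$, where $p=p_1\cdots p_n$ is a permutation chosen uniformly at random among all permutations of length $n$. Then there exists a constant $c>0$ (depending only on $k$) such that for all $n\ge k$, \[\operatorname{Var}(Y_n)\ge c\,n.\]
   Context: Each permutation of length $n$ is selected with probability $1/n!$. *)

From mathcomp Require Import all_boot all_order all_algebra all_fingroup.
Set Implicit Arguments. Unset Strict Implicit. Unset Printing Implicit Defensive.
Import Order.TTheory GRing.Theory Num.Theory.

(* One-line notation p = p_1 ... p_n of s : 'S_n, values 0..n-1, positions 0-based. *)
Definition pword (n : nat) (s : 'S_n) : seq nat := [seq (val (s i)) | i <- enum 'I_n].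

Definition incr_run (n k : nat) (s : 'S_n) (i : nat) : bool :=
  all (fun j => nth 0 (pword s) (i + j) < nth 0 (pword s) (i + j).+1) (iota 0 k.-1).

(* Y_n(p) = #{ i : 1 <= i <= n-k+1 | p_i < ... < p_{i+k-1} } (0-based: i in [0, n-k]) *)
Definition Y (n k : nat) (s : 'S_n) : nat := count (incr_run k s) (iota 0 (n.+1 - k)).

Local Open Scope ring_scope.

Definition EY (n k : nat) : rat := (\sum_(s : 'S_n) (Y k s)%:R) / (n`!)%:R.
Definition VarY (n k : nat) : rat :=
  (\sum_(s : 'S_n) ((Y k s)%:R - EY n k) ^+ 2) / (n`!)%:R.

From mathcomp Require Import all_boot all_order all_algebra all_fingroup.
From mathcomp Require Import zify ring lra.
Set Implicit Arguments. Unset Strict Implicit. Unset Printing Implicit Defensive.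
Import Order.TTheory GRing.Theory Num.Theory.

(* Write Y as the sum of the indicators r_i of an increasing run at position i.  Composing
   with the permutations of a window of k consecutive positions, exactly one of which sorts
   the window, shows that r_i has mean p = 1/k! and that runs on disjoint windows are
   independent.  Hence Cov(r_i, r_j) = 0 for |i - j| >= k, Cov(r_i, r_j) >= -p^2 always, and
   for k = 2 two adjacent runs form an increasing run of length 3, of probability 1/6.
   Each row of the covariance matrix thus sums to at least p - p^2 - 2(k-1)p^2 >= p/6
   (for k = 2, 1/4 + 2(1/6 - 1/4) = p/6), so Var Y >= (n-k+1) p/6 >= n p/(6k). *)

Definition pnth n (s : 'S_n) (x : nat) : nat := nth 0 (pword s) x.

Lemma pnth_ord n (s : 'S_n) (x : 'I_n) : pnth s x = s x.
Proof. by rewrite /pnth /pword (nth_map x) ?size_enum_ord // nth_ord_enum. Qed.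

Lemma pnth_default n (s : 'S_n) (x : nat) : n <= x -> pnth s x = 0.
Proof. by move=> h; rewrite /pnth nth_default // size_map size_enum_ord. Qed.

Lemma pnthM n (h s : 'S_n) (x : 'I_n) : pnth (h * s)%g x = pnth s (h x).
Proof. by rewrite !pnth_ord permM. Qed.

Lemma sorted_map_iota (f : nat -> nat) L i :
  sorted ltn (map f (iota i L)) = all (fun j => f j < f j.+1) (iota i L.-1).
Proof. by elim: L i => [|[|L] IH] i //=; rewrite -IH. Qed.

Lemma incr_runE L n (s : 'S_n) i :
  incr_run L s i = sorted ltn (map (pnth s) (iota i L)).
Proof. by rewrite sorted_map_iota /incr_run -(addn0 i) iotaDl all_map addn0. Qed.

Lemma eq_incr_run L n (s1 s2 : 'S_n) i :
  (forall x, i <= x -> pnth s1 x = pnth s2 x) -> incr_run L s1 i = incr_run L s2 i.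
Proof.
move=> eq12; rewrite !incr_runE; congr sorted; apply/eq_in_map => x.
by rewrite mem_iota => /andP[/eq12].
Qed.

Lemma incr_run2_adjacent n (s : 'S_n) i :
  incr_run 2 s i && incr_run 2 s i.+1 = incr_run 3 s i.
Proof. by rewrite /incr_run /= !andbT addn0 addn1 addn0. Qed.

Lemma weighted_sum_swap_lt (n a : nat) (u w : nat -> nat) : a.+1 < n ->
  w a = u a.+1 -> w a.+1 = u a -> (forall x, x <> a -> x <> a.+1 -> w x = u x) ->
  u a.+1 < u a ->
  \sum_(0 <= x < n) x * u x < \sum_(0 <= x < n) x * w x.
Proof.
move=> lt_an wa wa1 wx lt_u.
rewrite !(big_cat_nat (leq0n a) (ltnW (ltnW lt_an))).
have -> : \sum_(0 <= x < a) x * w x = \sum_(0 <= x < a) x * u x.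
  by apply: eq_big_nat => x /andP[_ hx]; rewrite wx //; lia.
rewrite ltn_add2l !(big_ltn (ltnW lt_an)) !(big_ltn lt_an) wa wa1.
have -> : \sum_(a.+2 <= x < n) x * w x = \sum_(a.+2 <= x < n) x * u x.
  by apply: eq_big_nat => x /andP[hx _]; rewrite wx //; lia.
rewrite !mulSn /=; lia.
Qed.

Section Window.
Variables (n L i : nat).
Hypothesis window_le : i + L <= n.

Definition window : {set 'I_n} := [set x : 'I_n | i <= x < i + L].

Lemma card_window : #|window| = L.
Proof.
have lt_n (l : 'I_L) : i + l < n by apply: leq_trans window_le; rewrite ltn_add2l.
have -> : window = [set Ordinal (lt_n l) | l : 'I_L].
  apply/setP => x; rewrite inE; apply/idP/imsetP => [/andP[ix xiL]|[l _ ->] /=].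
  - have lt_xL : x - i < L by lia.
    by exists (Ordinal lt_xL) => //; apply: val_inj => /=; lia.
  - by rewrite leq_addr ltn_add2l ltn_ord.
by rewrite card_imset ?card_ord // => l1 l2 /(congr1 val)/addnI/val_inj.
Qed.

Lemma mem_window_word (s h : 'S_n) y : perm_on window h ->
  (y \in map (pnth (h * s)%g) (iota i L)) = [exists x in window, y == s x].
Proof.
move=> hW; apply/mapP/existsP => [[l]|[x /andP[xW /eqP ->]]].
- rewrite mem_iota => il ->; have lt_ln : l < n by lia.
  exists (h (Ordinal lt_ln)).
  by rewrite perm_closed // inE (pnthM h s (Ordinal lt_ln)) pnth_ord eqxx andbT.
- exists (val ((h^-1)%g x)); last by rewrite pnthM permKV pnth_ord.
  by move: xW; rewrite -(perm_closed _ (perm_onV hW)) inE mem_iota.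
Qed.

Lemma window_sort_uniq (s h1 h2 : 'S_n) : perm_on window h1 -> perm_on window h2 ->
  incr_run L (h1 * s)%g i -> incr_run L (h2 * s)%g i -> h1 = h2.
Proof.
move=> hW1 hW2; rewrite !incr_runE => sort1 sort2.
have eq_words : map (pnth (h1 * s)%g) (iota i L) = map (pnth (h2 * s)%g) (iota i L).
  by apply: (irr_sorted_eq ltn_trans ltnn sort1 sort2) => y; rewrite !mem_window_word.
apply/permP => x; have [xW|xNW] := boolP (x \in window); last first.
  by rewrite (out_perm hW1) ?(out_perm hW2).
move: xW; rewrite inE => /andP[ix xiL].
have := congr1 (nth 0 ^~ (x - i)) eq_words.
rewrite !(nth_map 0) ?size_iota ?nth_iota; try lia.
by rewrite subnKC // !pnthM !pnth_ord => /val_inj/perm_inj.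
Qed.

Lemma tperm_on_window (a b : 'I_n) :
  a \in window -> b \in window -> perm_on window (tperm a b).
Proof.
move=> aW bW; apply/subsetP => x; rewrite inE.
by case: tpermP => [->|->|/eqP]; rewrite ?eqxx.
Qed.

(* A window permutation h maximising \sum x * (h * s) x leaves no descent in the window,
   since swapping one would increase the weight. *)
Lemma window_sort_exists (s : 'S_n) :
  exists2 h, perm_on window h & incr_run L (h * s)%g i.
Proof.
pose weight h := \sum_(0 <= x < n) x * pnth (h * s)%g x.
have [h hW hmax] := @arg_maxnP _ 1%g (perm_on window) weight (perm_on1 _).
exists h => //; apply/negPn/negP; rewrite /incr_run => /allPn[j].
rewrite mem_iota -leqNgt => jL desc.
have lt_a : i + j < n by lia.
have lt_b : (i + j).+1 < n by lia.
pose a := Ordinal lt_a; pose b := Ordinal lt_b.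
have lt_ba : pnth (h * s)%g b < pnth (h * s)%g a.
  rewrite ltn_neqAle desc andbT !pnth_ord; apply/eqP => /val_inj/perm_inj.
  by move=> /(congr1 val) /=; lia.
have abW : perm_on window (tperm a b * h)%g.
  by apply: perm_onM => //; apply: tperm_on_window; rewrite inE /=; lia.
have := hmax _ abW; rewrite /geq /= leqNgt => /negP; apply.
apply: (@weighted_sum_swap_lt n (i + j)) => //.
- by rewrite -mulgA (pnthM _ _ a) tpermL.
- by rewrite -mulgA (pnthM _ _ b) tpermR.
move=> x xa xb; have [lt_xn|le_nx] := ltnP x n; last by rewrite !pnth_default.
rewrite -mulgA (pnthM _ _ (Ordinal lt_xn)) tpermD //.
  by apply/eqP => /(congr1 val) /= ?; lia.
by apply/eqP => /(congr1 val) /= ?; lia.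
Qed.

Lemma sum_window_sort (s : 'S_n) :
  \sum_(h | perm_on window h) (incr_run L (h * s)%g i : nat) = 1.
Proof.
have [h0 h0W h0sort] := window_sort_exists s.
rewrite (bigD1 h0) //= h0sort big1 // => h /andP[hW neq_h].
case hsort: (incr_run L (h * s)%g i) => //.
by rewrite (window_sort_uniq hW h0W hsort h0sort) eqxx in neq_h.
Qed.

(* Double counting over the pairs (s, h) with h * s sorted on the window. *)
Lemma count_window_invariant (Q : 'S_n -> bool) :
  (forall h s, perm_on window h -> Q (h * s)%g = Q s) ->
  \sum_(s : 'S_n) (Q s : nat) = L`! * \sum_(s : 'S_n) (incr_run L s i && Q s : nat).
Proof.
move=> Qinv.
transitivity (\sum_(s : 'S_n)
                \sum_(h | perm_on window h) (Q s && incr_run L (h * s)%g i : nat)).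
  apply: eq_bigr => s _; case: (Q s); first by rewrite sum_window_sort.
  by rewrite big1.
rewrite exchange_big /= -[L in L`!]card_window -card_perm -sum_nat_const.
apply: eq_big => // h hW; rewrite [RHS](reindex_inj (mulgI h)) /=.
by apply: eq_bigr => s _; rewrite Qinv // andbC.
Qed.

End Window.

Lemma card_incr_run n k i : i + k <= n ->
  n`! = k`! * \sum_(s : 'S_n) (incr_run k s i : nat).
Proof.
move=> le_ikn; have := count_window_invariant le_ikn (Q := xpredT) (fun _ _ _ => erefl).
rewrite sum_nat_const card_Sn muln1 => ->.
by congr (_ * _); apply: eq_bigr => s _; rewrite andbT.
Qed.

Lemma card_incr_run_disjoint n k i j : i + k <= j -> j + k <= n ->
  n`! = k`! * k`! * \sum_(s : 'S_n) (incr_run k s i && incr_run k s j : nat).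
Proof.
move=> le_ikj le_jkn; have le_ikn : i + k <= n by lia.
rewrite (card_incr_run le_jkn) -mulnA -(count_window_invariant le_ikn) // => h s hW.
apply: eq_incr_run => x le_jx; have [lt_xn|le_nx] := ltnP x n; last first.
  by rewrite !pnth_default.
rewrite (pnthM h s (Ordinal lt_xn)) (out_perm hW) // inE /=; lia.
Qed.

Lemma fact_ge_linear k : 3 <= k -> 6 * (2 * k - 1) <= 5 * k`!.
Proof.
move=> le3k; have [j ->] : exists j, k = j + 3 by exists (k - 3); lia.
elim: j => [|j IH] //; rewrite addSn factS; have := fact_gt0 (j + 3); nia.
Qed.

Lemma sum_ord_range m a b : \sum_(j < m) (a <= j < b : nat) = minn m b - a.
Proof.
elim: m => [|m IH]; first by rewrite big_ord0 min0n.
by rewrite big_ord_recr /= IH; case: (boolP (a <= m < b)) => /=; lia.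
Qed.

Local Open Scope ring_scope.

Definition pmean n (f : 'S_n -> rat) : rat := (\sum_(s : 'S_n) f s) / (n`!)%:R.

Lemma fact_neq0 n : (n`!)%:R != 0 :> rat.
Proof. by rewrite pnatr_eq0 -lt0n fact_gt0. Qed.

Lemma pmean_sq_dev n (f : 'S_n -> rat) :
  pmean (fun s => (f s - pmean f) ^+ 2) = pmean (fun s => f s ^+ 2) - pmean f ^+ 2.
Proof.
rewrite /pmean; set N := (n`!)%:R; set mu := (\sum_s f s) / N.
have sum_f : \sum_s f s = mu * N by rewrite divfK ?fact_neq0.
have -> : \sum_s (f s - mu) ^+ 2 = \sum_s f s ^+ 2 - 2 * mu * \sum_s f s + N * mu ^+ 2.
  have -> : N * mu ^+ 2 = \sum_(s : 'S_n) mu ^+ 2 by rewrite sumr_const card_Sn mulr_natl.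
  by rewrite mulr_sumr -sumrB -big_split /=; apply: eq_bigr => s _; ring.
by rewrite sum_f; field; rewrite fact_neq0.
Qed.

Lemma eq_pmean n (f g : 'S_n -> rat) : f =1 g -> pmean f = pmean g.
Proof. by move=> eq_fg; rewrite /pmean (eq_bigr _ (fun s _ => eq_fg s)). Qed.

Lemma pmean_sum n (I : finType) (f : I -> 'S_n -> rat) :
  pmean (fun s => \sum_i f i s) = \sum_i pmean (f i).
Proof. by rewrite /pmean exchange_big mulr_suml. Qed.

Lemma pmean_indicator n (P : pred 'S_n) a : n`! = (a * \sum_s (P s : nat))%N ->
  pmean (fun s => (P s : nat)%:R) = a%:R^-1.
Proof.
move=> def_fact; have := fact_neq0 n.
rewrite /pmean -natr_sum def_fact natrM mulf_eq0 negb_or => /andP[a_neq0 sum_neq0].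
by field; apply/andP.
Qed.

Section Covariance.
Variables (k n : nat).
Hypothesis le2k : (2 <= k)%N.

Local Notation m := (n.+1 - k)%N.
Let p : rat := (k`!)%:R^-1.

Definition run (i : nat) (s : 'S_n) : rat := (incr_run k s i : nat)%:R.
Definition cov (i j : nat) : rat := pmean (fun s => run i s * run j s) - p ^+ 2.
Definition far (i j : nat) : bool := (i + k <= j)%N || (j + k <= i)%N.

Lemma runM i j s : run i s * run j s = (incr_run k s i && incr_run k s j : nat)%:R.
Proof. by rewrite /run; do 2 case: incr_run. Qed.

Lemma pmean_run (i : 'I_m) : pmean (run i) = p.
Proof. by apply: pmean_indicator; apply: card_incr_run; have := ltn_ord i; lia. Qed.

Lemma covC i j : cov i j = cov j i.
Proof. by rewrite /cov (eq_pmean (fun s => mulrC (run i s) _)). Qed.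

Lemma cov_diag (i : 'I_m) : cov i i = p - p ^+ 2.
Proof.
by rewrite /cov -(pmean_run i); congr (_ - _); apply: eq_pmean => s; rewrite runM andbb.
Qed.

Lemma cov_far (i j : 'I_m) : far i j -> cov i j = 0.
Proof.
wlog le_ikj : i j / (i + k <= j)%N => [sym|].
  by case/orP => far_ij; [|rewrite covC]; apply: sym; rewrite // /far far_ij ?orbT.
move=> _; rewrite /cov (eq_pmean (runM i j)).
rewrite (pmean_indicator (card_incr_run_disjoint le_ikj _)).
  by rewrite natrM invfM subrr.
by have := ltn_ord j; lia.
Qed.

Lemma Y_sum_run s : (Y k s)%:R = \sum_(i < m) run i s.
Proof.
rewrite /Y -sum1_count big_mkcond /= -{1}(subn0 m) big_mkord natr_sum.
by apply: eq_bigr => i _; rewrite /run; case: incr_run.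
Qed.

Lemma VarY_sum_cov : VarY n k = \sum_(i < m) \sum_(j < m) cov i j.
Proof.
have pmean_Y2 : pmean (fun s : 'S_n => (Y k s)%:R ^+ 2) =
    \sum_(i < m) \sum_(j < m) pmean (fun s => run i s * run j s).
  have Y2_sum s : (Y k s)%:R ^+ 2 = \sum_(i < m) \sum_(j < m) run i s * run j s.
    by rewrite Y_sum_run expr2 mulr_suml; under eq_bigr do rewrite mulr_sumr.
  by rewrite (eq_pmean Y2_sum) pmean_sum; apply: eq_bigr => i _; rewrite pmean_sum.
have pmean_Y : pmean (fun s : 'S_n => (Y k s)%:R) = m%:R * p.
  rewrite (eq_pmean Y_sum_run) pmean_sum.
  by under eq_bigr do rewrite pmean_run; rewrite sumr_const card_ord mulr_natl.
rewrite [VarY n k]pmean_sq_dev pmean_Y2 pmean_Y.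
under [RHS]eq_bigr do rewrite sumrB sumr_const card_ord.
by rewrite sumrB sumr_const card_ord; ring.
Qed.

Lemma cov_ge i j : - p ^+ 2 <= cov i j.
Proof.
have : 0 <= pmean (fun s => run i s * run j s).
  by rewrite /pmean divr_ge0 // sumr_ge0 // => s _; rewrite runM.
by rewrite /cov; lra.
Qed.

Lemma cov_succ_run2 i : k = 2%N -> (i + 3 <= n)%N -> cov i i.+1 = 6^-1 - p ^+ 2.
Proof.
move=> k2 le_i3n; rewrite /cov (eq_pmean (runM i i.+1)) k2.
rewrite (eq_pmean (fun s => congr1 (fun b : bool => (b : nat)%:R) (incr_run2_adjacent s i))).
by rewrite (pmean_indicator (card_incr_run le_i3n)).
Qed.

Lemma count_near (i : 'I_m) :
  (\sum_(j < m | j != i) (~~ far i j : nat) <= 2 * (k - 1))%N.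
Proof.
rewrite big_mkcond /=.
apply: (@leq_trans (\sum_(j < m) ((i < j < i + k : nat) + (i.+1 - k <= j < i : nat))))%N.
  apply: leq_sum => j _; case: eqVneq => [//|/eqP ne_ji].
  have : (j : nat) <> i by move=> /val_inj.
  rewrite /far /=; lia.
rewrite big_split /= !sum_ord_range; lia.
Qed.

Let near_lb : rat := (if k == 2%N then 6^-1 else 0) - p ^+ 2.

Lemma near_lb_le0 : near_lb <= 0.
Proof.
rewrite /near_lb /p; case: eqP => [->|_]; last by rewrite subr_le0 sqr_ge0.
have -> : (2`!)%:R = 2 :> rat by [].
lra.
Qed.

Lemma cov_near_ge (i j : 'I_m) : j != i -> (~~ far i j : nat)%:R * near_lb <= cov i j.
Proof.
move=> /eqP ne_ji; have {}ne_ji : (j : nat) <> i by move=> /val_inj.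
have [far_ij|near_ij] := boolP (far i j); first by rewrite cov_far // mul0r.
rewrite mul1r /near_lb; case: eqP => [k2|_]; last by rewrite add0r cov_ge.
have lt_im := ltn_ord i; have lt_jm := ltn_ord j; move: near_ij; rewrite /far => near_ij.
have [ji|ij] : j = i.+1 :> nat \/ i = j.+1 :> nat by lia.
  by rewrite ji cov_succ_run2 //; lia.
by rewrite ij covC cov_succ_run2 //; lia.
Qed.

Lemma cov_row_lb_ge :
  p / 6 <= p - p ^+ 2 + (2 * (k - 1))%:R * near_lb.
Proof.
have p_gt0 : 0 < p by rewrite invr_gt0 ltr0n fact_gt0.
rewrite /near_lb; case: eqP => [k2|/eqP k_neq2].
  have fact2 : (2`!)%:R = 2 :> rat by [].
  by rewrite /p k2 fact2; lra.
have le3k : (3 <= k)%N by lia.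
have : (2 * k - 1)%:R * p <= 5 / 6.
  have : (6 * (2 * k - 1))%:R <= (5 * k`!)%:R :> rat by rewrite ler_nat fact_ge_linear.
  have : (k`!)%:R * p = 1 by rewrite mulfV ?fact_neq0.
  rewrite !natrM; nra.
have -> : (2 * (k - 1))%:R = (2 * k - 1)%:R - 1 :> rat.
  by apply/eqP; rewrite eq_sym subr_eq natr1 eqr_nat; apply/eqP; lia.
rewrite add0r; nra.
Qed.

Lemma cov_row_ge (i : 'I_m) : p / 6 <= \sum_(j < m) cov i j.
Proof.
rewrite (bigD1 i) //= cov_diag; apply: le_trans cov_row_lb_ge _; rewrite lerD2l.
apply: le_trans (ler_sum _ (fun j => cov_near_ge (i := i) (j := j))).
rewrite -mulr_suml -natr_sum ler_wnM2r ?near_lb_le0 // ler_nat; exact: count_near.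
Qed.

Lemma VarY_ge : m%:R * p / 6 <= VarY n k.
Proof.
rewrite VarY_sum_cov; apply: le_trans (ler_sum _ (fun i _ => cov_row_ge i)).
by rewrite sumr_const card_ord -mulrA mulr_natl.
Qed.

End Covariance.

Theorem proposition3p4 (k : nat) (hk : (2 <= k)%N) :
  exists c : rat, 0 < c /\ forall n : nat, (k <= n)%N -> c * n%:R <= VarY n k.
Proof.
pose p : rat := (k`!)%:R^-1.
have p_gt0 : 0 < p by rewrite invr_gt0 ltr0n fact_gt0.
have k_gt0 : (0 : rat) < k%:R by rewrite ltr0n; lia.
exists (p / 6 / k%:R); split; first by rewrite !divr_gt0.
move=> n le_kn; apply: le_trans (VarY_ge n hk); rewrite -/p.
have le_n_mk : n%:R / k%:R <= (n.+1 - k)%:R :> rat.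
  by rewrite ler_pdivrMr // -natrM ler_nat; nia.
have -> : p / 6 / k%:R * n%:R = p / 6 * (n%:R / k%:R) by ring.
have -> : (n.+1 - k)%:R * p / 6 = p / 6 * (n.+1 - k)%:R by ring.
by rewrite ler_pM2l ?divr_gt0.
Qed.
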